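(* Let $\Phi$ be an action of the Lie $\infty$-algebra $(E,M_E)$ on the Lie $\infty$-algebra $(V,M_V)$, and let $\tilde T:\bar S(\bar S(V))\to\bar S(E)$ be an $\mathcal O$-operator with respect to the induced representation $\rho$ of $E$ on $\bar S(V)$, i.e. a comorphism satisfying, for all $w\in\bar S(\bar S(V))$, $M_E\circ\tilde T(w)=\tilde T\big(\Phi^{\mathrm d}_{\tilde T(w_{(1)})}w_{(2)}+M_V^{\mathrm d}(w)\big)$ (with the first term interpreted as $0$ for $w\in S^1(\bar S(V))$). Then $T=\tilde T\circ I:\bar S(V)\to\bar S(E)$ is an $\mathcal O$-operator on $E$ with respect to the action $\Phi$.
   Context: Graded vector spaces are $\mathbb Z$-graded, finite dimensional over $\mathbb R$ or $\mathbb C$, with Koszul signs. $\bar S(W)$ is the reduced graded symmetric coalgebra with unshuffle coproduct $\Delta$, Sweedler notation $\Delta(w)=w_{(1)}\otimes w_{(2)}$. A comorphism is a degree $0$ coalgebra morphism. A Lie $\infty$-algebra $(E,M_E)$ is a degree $+1$ coderivation of $\bar S(E)$ with $M_E^2=0$. $\mathrm{Coder}(\bar S(V))[1]$ is the symmetric DGLA with $\partial_{M_V}Q=-M_VQ+(-1)^{\deg Q}QM_V$, $[Q,P]=(-1)^{\deg Q}(QP-(-1)^{\deg Q\deg P}PQ)$. An action of $(E,M_E)$ on $(V,M_V)$ is a degree $+1$ linear map $\bar S(E)\to\mathrm{Coder}(\bar S(V))$, $x\mapsto\Phi_x$, with $\Phi_{M_E(x)}=\partial_{M_V}\Phi_x+\frac12[\Phi_{x_{(1)}},\Phi_{x_{(2)}}]$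 for all $x$ (last term $0$ for $x\in E$). The induced representation is $\rho(x)=\Phi_x\in\mathrm{End}(\bar S(V))$. For a linear map $D:\bar S(V)\to\bar S(V)$, $D^{\mathrm d}$ denotes the coderivation (and derivation) of $\bar S(\bar S(V))$ extending $D$, i.e. determined by the map equal to $D$ on $S^1(\bar S(V))$ and $0$ on $S^{\ge2}(\bar S(V))$; $\Phi^{\mathrm d}_x:=(\Phi_x)^{\mathrm d}$. $I:\bar S(V)\to\bar S(\bar S(V))$ is the comorphism determined by the identity map of $\bar S(V)$. For a degree $0$ map $T:\bar S(V)\to\bar S(E)$, $\Phi^T$ is the map $\bar S(V)\to\bar S(V)$ with $\Phi^T(v)=0$ for $v\in V$ and $\Phi^T(v)=\Phi_{T(v_{(1)})}v_{(2)}$ for $v\in S^{\ge2}(V)$. An $\mathcal O$-operator on $E$ with respect to $\Phi$ is a comorphism $T:\bar S(V)\to\bar S(E)$ with $M_E\circ T=T\circ(\Phi^T+M_V)$. *)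

From HB Require Import structures.
From mathcomp Require Import all_boot all_order all_algebra.
From mathcomp Require Import finmap monalg.
Set Implicit Arguments. Unset Strict Implicit. Unset Printing Implicit Defensive.
Import Order.TTheory GRing.Theory Num.Theory.
Local Open Scope ring_scope.

(* A graded vector space is modelled by a homogeneous basis: a choiceType B *)
(* with a degree function.  [gb_le] is an auxiliary total order used only  *)
(* to pick canonical monomials, and [gb_ok] selects the basis elements     *)
(* that are actually present (always true for a plain basis).             *)
Record gbasis (B : choiceType) := GBasis {
  gb_le : rel B; gb_deg : B -> int; gb_ok : pred B }.

Fixpoint lexrel (B : eqType) (le : rel B) (s t : seq B) : bool :=
  match s, t with
  | [::], _ => true
  | _ :: _, [::] => false
  | a :: s', b :: t' => if a == b then lexrel le s' t' else le a b
  end.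

Section Gen.
Variable R : numFieldType.

Definition koz (a b : int) : R :=
  if odd `|a|%N && odd `|b|%N then -1 else 1.

Definition islin (U W : lmodType R) (f : U -> W) :=
  forall (a : R) (x y : U), f (a *: x + y) = a *: f x + f y.

Variable B : choiceType.
Variable G : gbasis B.

(* Ambient spaces: T(W) with basis seq B, and T(W) (x) T(W). Elements of   *)
(* the reduced symmetric coalgebra are the vectors supported on canonical *)
(* monomials (sorted words, odd basis vectors at most once).              *)
Definition Vec := {malg R[seq B]}.
Definition Ten := {malg R[(seq B * seq B)%type]}.

Definition degS (s : seq B) : int := \sum_(x <- s) gb_deg G x.

Definition canon (s : seq B) : bool :=
  [&& s != [::], all (gb_ok G) s, sorted (gb_le G) s &
      all (fun x => odd `|gb_deg G x|%N ==> (count_mem x s <= 1)%N) s].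

Definition inS (x : Vec) : Prop := forall s, s \in msupp x -> canon s.
Definition homog (d : int) (x : Vec) : Prop :=
  forall s, s \in msupp x -> degS s = d.

Definition pair_sign (s : seq B) (P : 'I_(size s) -> 'I_(size s) -> bool) : R :=
  \prod_(i < size s) \prod_(j < size s | (i < j)%N && P i j)
     koz (gb_deg G (tnth (in_tuple s) i)) (gb_deg G (tnth (in_tuple s) j)).

(* Koszul sign of the sorting permutation *)
Definition sort_sign (s : seq B) : R :=
  pair_sign (fun i j => ~~ gb_le G (tnth (in_tuple s) i) (tnth (in_tuple s) j)).

(* the monomial s_1 ... s_n of the graded symmetric coalgebra *)
Definition mono (s : seq B) : Vec :=
  if canon (sort (gb_le G) s) then sort_sign s *: << sort (gb_le G) s >> else 0.

Definition lin (W : lmodType R) (f : seq B -> W) (x : Vec) : W :=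
  \sum_(s <- msupp x) x@_s *: f s.

Definition tens (x y : Vec) : Ten :=
  \sum_(s <- msupp x) \sum_(t <- msupp y) (x@_s * y@_t) *: << (s, t) >>.

(* Koszul sign of the unshuffle selected by the mask b *)
Definition unsh_sign (b : seq bool) (s : seq B) : R :=
  pair_sign (fun i j : 'I_(size s) => ~~ nth false b i && nth false b j).

Definition cop_b (s : seq B) : Ten :=
  \sum_(b : (size s).-tuple bool | (true \in b) && (false \in b))
     unsh_sign b s *: tens (mono (mask b s)) (mono (mask (map negb b) s)).

Definition cop (x : Vec) : Ten := lin cop_b x.

Definition coder (d : int) (Q : Vec -> Vec) : Prop :=
  [/\ islin Q, forall x, inS x -> inS (Q x),
      forall k x, inS x -> homog k x -> homog (k + d) (Q x) &
      forall x, inS x -> cop (Q x) =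
        \sum_(p <- msupp (cop x)) ((cop x)@_p) *: tens (Q << p.1 >>) << p.2 >>
      + \sum_(p <- msupp (cop x)) ((cop x)@_p * koz d (degS p.1))
            *: tens << p.1 >> (Q << p.2 >>)].

Definition LieInf (M : Vec -> Vec) : Prop :=
  coder 1 M /\ forall x, inS x -> M (M x) = 0.

End Gen.

Section Maps.
Variable R : numFieldType.
Variables (B C : choiceType) (GB : gbasis B) (GC : gbasis C).

Definition comorph (F : Vec R B -> Vec R C) : Prop :=
  [/\ islin F, forall x, inS GB x -> inS GC (F x),
      forall d x, inS GB x -> homog GB d x -> homog GC d (F x) &
      forall x, inS GB x -> cop GC (F x) =
        \sum_(p <- msupp (cop GB x)) ((cop GB x)@_p) *: tens (F << p.1 >>) (F << p.2 >>)].

(* x |-> Phi_x, given by its values on the basis monomials m *)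
Definition Phi_at (Phi : seq B -> Vec R C -> Vec R C) (x : Vec R B) (y : Vec R C) :=
  \sum_(m <- msupp x) x@_m *: Phi m y.

(* Phi^T(v) = Phi_{T(v_(1))} v_(2)  (0 on V since the reduced coproduct  *)
(* vanishes there)                                                       *)
Definition PhiT (Phi : seq B -> Vec R C -> Vec R C) (T : Vec R C -> Vec R B)
  (v : Vec R C) : Vec R C :=
  \sum_(p <- msupp (cop GC v)) (cop GC v)@_p *: Phi_at Phi (T << p.1 >>) << p.2 >>.

Definition action (ME : Vec R B -> Vec R B) (MV : Vec R C -> Vec R C)
  (Phi : seq B -> Vec R C -> Vec R C) : Prop :=
  (forall m, canon GB m -> coder GC (degS GB m + 1) (Phi m)) /\
  forall x y, inS GB x -> inS GC y ->
    Phi_at Phi (ME x) y =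
      \sum_(m <- msupp x) x@_m *:
          (- MV (Phi m y) + koz R 1 (degS GB m + 1) *: Phi m (MV y))
    + 2^-1 *: \sum_(p <- msupp (cop GB x)) (cop GB x)@_p *:
          (koz R 1 (degS GB p.1 + 1) *:
             (Phi p.1 (Phi p.2 y)
              - koz R (degS GB p.1 + 1) (degS GB p.2 + 1) *: Phi p.2 (Phi p.1 y))).
End Maps.

Definition Oop (R : numFieldType) (B C : choiceType) (GB : gbasis B) (GC : gbasis C)
  (ME : Vec R B -> Vec R B) (MV : Vec R C -> Vec R C)
  (Phi : seq B -> Vec R C -> Vec R C) (T : Vec R C -> Vec R B) : Prop :=
  @comorph R C B GC GB T /\
  forall v, inS GC v -> ME (T v) = T (PhiT GC Phi T v + MV v).


Section Outer.
Variable R : numFieldType.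
Variables (B : choiceType) (G : gbasis B).

(* basis data of S(W) (canonical monomials), used to build S(S(W)) *)
Definition outer : gbasis (seq B) :=
  GBasis (lexrel (gb_le G)) (degS G) (canon G).

(* projection S(S(W)) -> S^1(S(W)) = S(W) *)
Definition pr1 (w : Vec R (seq B)) : Vec R B :=
  \sum_(u <- msupp w | size u == 1%N) w@_u *: << head [::] u >>.

(* Dd = D^d : the coderivation of S(S(W)) of degree d extending D *)
Definition extends (d : int) (D : Vec R B -> Vec R B)
  (Dd : Vec R (seq B) -> Vec R (seq B)) : Prop :=
  coder outer d Dd /\
  forall u, canon outer u ->
    pr1 (Dd << u >>) = if size u == 1%N then D << head [::] u >> else 0.

(* I : the comorphism S(W) -> S(S(W)) determined by the identity *)
Definition is_I (I : Vec R B -> Vec R (seq B)) : Prop :=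
  comorph G outer I /\ forall x, inS G x -> pr1 (I x) = x.
End Outer.

Definition fin_gb (n : nat) (deg : 'I_n -> int) : gbasis 'I_n :=
  GBasis (fun i j : 'I_n => (i <= j)%N) deg predT.

(* Comorphisms compose, so T is a comorphism.  The heart of the proof is the
   intertwining identity  D^d o I = I o D  for every coderivation D of S(V):
   both sides are coderivations along I, they agree after projecting onto
   S^1(S(V)), and S(S(V)) is cogenerated by this projection (an element with
   vanishing linear part and vanishing reduced coproduct is zero).  Induction
   on the word length then forces the two sides to agree on every monomial.
   Applied to D = M_V and to D = Phi_m, the identity turns the O-operator
   equation of T~ evaluated at I(v) into the O-operator equation of T at v. *)

From HB Require Import structures.
From mathcomp Require Import all_boot all_order all_algebra.
From mathcomp Require Import finmap monalg.
Set Implicit Arguments. Unset Strict Implicit. Unset Printing Implicit Defensive.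
Import Order.TTheory GRing.Theory Num.Theory.
Local Open Scope ring_scope.

Section Linearity.
Variables (R : numFieldType) (U W : lmodType R) (F : U -> W).
Hypothesis LF : islin F.

Lemma islin0 : F 0 = 0.
Proof.
have := LF 1 0 0; rewrite !scale1r addr0 => /(congr1 (fun z => z - F 0)).
by rewrite subrr addrK.
Qed.

Lemma islinD x y : F (x + y) = F x + F y.
Proof. by have := LF 1 x y; rewrite !scale1r. Qed.

Lemma islinZ c x : F (c *: x) = c *: F x.
Proof. by rewrite -[c *: x]addr0 LF islin0 addr0. Qed.

Lemma islinB x y : F (x - y) = F x - F y.
Proof. by rewrite islinD -scaleN1r islinZ scaleN1r. Qed.

Lemma islin_sum (I : Type) (r : seq I) (P : pred I) (G : I -> U) :
  F (\sum_(i <- r | P i) G i) = \sum_(i <- r | P i) F (G i).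
Proof. exact: (big_morph _ islinD islin0). Qed.
End Linearity.

Section LinearExtension.
Variables (R : numFieldType) (K : choiceType).

Section Target.
Variable W : lmodType R.

Definition linext (f : K -> W) (g : {malg R[K]}) : W :=
  \sum_(k <- msupp g) g@_k *: f k.

Lemma linext_dom f g (d : {fset K}) : (msupp g `<=` d)%fset ->
  linext f g = \sum_(k <- d) g@_k *: f k.
Proof.
move=> sub; rewrite /linext (big_fset_incl _ sub) // => k _ kn.
by rewrite mcoeff_outdom // scale0r.
Qed.

Lemma linextD f g1 g2 : linext f (g1 + g2) = linext f g1 + linext f g2.
Proof.
rewrite (linext_dom f (msuppD_le g1 g2)) (linext_dom f (fsubsetUl (msupp g1) (msupp g2))).
rewrite (linext_dom f (fsubsetUr (msupp g1) (msupp g2))) -big_split.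
by apply: eq_bigr => k _; rewrite mcoeffD scalerDl.
Qed.

Lemma linextZ f c g : linext f (c *: g) = c *: linext f g.
Proof.
rewrite (linext_dom f (msuppZ_le c g)) /linext scaler_sumr; apply: eq_bigr => k _.
by rewrite mcoeffZ scalerA.
Qed.

Lemma islin_linext f : islin (linext f).
Proof. by move=> a x y; rewrite linextD linextZ. Qed.

Lemma linext1 f k : linext f << k >> = f k.
Proof. by rewrite /linext msuppU oner_eq0 big_seq_fset1 mcoeffUU scale1r. Qed.

Lemma eq_linext f1 f2 g : (forall k, k \in msupp g -> f1 k = f2 k) ->
  linext f1 g = linext f2 g.
Proof.
move=> E; rewrite /linext big_seq_cond [RHS]big_seq_cond.
by apply: eq_bigr => k /andP[/E -> _].
Qed.

Lemma linext_eq0 f g : (forall k, k \in msupp g -> f k = 0) -> linext f g = 0.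
Proof. by move=> E; rewrite /linext big_seq big1 // => k /E ->; rewrite scaler0. Qed.

Lemma linext_fun (f1 f2 : K -> W) a g :
  linext (fun k => a *: f1 k + f2 k) g = a *: linext f1 g + linext f2 g.
Proof.
rewrite /linext scaler_sumr -big_split; apply: eq_bigr => k _.
by rewrite scalerDr !scalerA mulrC.
Qed.

Lemma linext_add (f1 f2 : K -> W) g :
  linext (fun k => f1 k + f2 k) g = linext f1 g + linext f2 g.
Proof. by rewrite -[linext f1 g]scale1r -linext_fun; apply: eq_linext => k _; rewrite scale1r. Qed.

Lemma linext_scale (f : K -> W) a g : linext (fun k => a *: f k) g = a *: linext f g.
Proof. by rewrite /linext scaler_sumr; apply: eq_bigr => k _; rewrite !scalerA mulrC. Qed.
End Target.

Lemma linext_id (g : {malg R[K]}) : linext (fun k => << k >>) g = g.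
Proof.
rewrite [RHS]monalgE; apply: eq_bigr => k _.
by apply/malgP => k'; rewrite mcoeffZ !mcoeffU mulr_natr.
Qed.

Lemma linext_comm (W W' : lmodType R) (F : W -> W') (f : K -> W) g :
  islin F -> F (linext f g) = linext (fun k => F (f k)) g.
Proof. by move=> LF; rewrite /linext islin_sum //; apply: eq_bigr => k _; rewrite islinZ. Qed.

Lemma linext_basis (W : lmodType R) (F : {malg R[K]} -> W) g :
  islin F -> F g = linext (fun k => F << k >>) g.
Proof. by move=> LF; rewrite -linext_comm // linext_id. Qed.

Lemma mcoeff_linext (K' : choiceType) (f : K -> {malg R[K']}) g k :
  (linext f g)@_k = \sum_(i <- msupp g) g@_i * (f i)@_k.
Proof. by rewrite /linext raddf_sum; apply: eq_bigr => i _; exact: mcoeffZ. Qed.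

End LinearExtension.

Lemma msupp_sum (R : numFieldType) (K : choiceType) (I : eqType) (r : seq I) (P : pred I) (F : I -> {malg R[K]}) k :
  k \in msupp (\sum_(i <- r | P i) F i) ->
  exists2 i, (i \in r) && P i & k \in msupp (F i).
Proof.
elim: r => [|a r IH]; first by rewrite big_nil msupp0 inE.
rewrite big_cons; case Pa: (P a); [move/(fsubsetP (msuppD_le _ _))|].
  rewrite inE => /orP [H|/IH [i /andP[ir Pi] H]]; [exists a | exists i] => //;
  by rewrite inE ?eqxx ?ir ?Pa ?Pi ?orbT.
by move=> /IH [i /andP[ir Pi] H]; exists i => //; rewrite inE ir orbT.
Qed.

Lemma msupp_linext (R : numFieldType) (K K' : choiceType) (f : K -> {malg R[K']}) g k :
  k \in msupp (linext f g) -> exists2 i, i \in msupp g & k \in msupp (f i).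
Proof.
case/msupp_sum => i /andP[ig _]; rewrite msuppZ; case: eqP => _; first by rewrite inE.
by exists i.
Qed.

Lemma linext_comp (R : numFieldType) (K K' : choiceType) (W : lmodType R)
  (h : K' -> W) (F : K -> {malg R[K']}) g :
  linext h (linext F g) = linext (fun k => linext h (F k)) g.
Proof. exact: linext_comm (islin_linext h). Qed.

Lemma linext_swap (R : numFieldType) (K1 K2 : choiceType) (W : lmodType R)
  (g : K1 -> K2 -> W) (X : {malg R[K1]}) (Y : {malg R[K2]}) :
  linext (fun t => linext (fun m => g m t) X) Y = linext (fun m => linext (fun t => g m t) Y) X.
Proof.
rewrite /linext; under eq_bigr do rewrite scaler_sumr.
rewrite exchange_big /=; apply: eq_bigr => m _; rewrite scaler_sumr; apply: eq_bigr => t _.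
by rewrite !scalerA mulrC.
Qed.

Section Tensors.
Variables (R : numFieldType) (B : choiceType).
Implicit Types (x y : Vec R B).

Lemma tensE x y : tens x y = linext (fun s => linext (fun t => << (s, t) >> : Ten R B) y) x.
Proof.
rewrite /tens /linext; apply: eq_bigr => s _; rewrite scaler_sumr.
by apply: eq_bigr => t _; rewrite scalerA.
Qed.

Lemma tens_linext (W : lmodType R) (h : (seq B * seq B) -> W) x y :
  linext h (tens x y) = linext (fun s => linext (fun t => h (s, t)) y) x.
Proof.
rewrite tensE linext_comp; apply: eq_linext => s _; rewrite linext_comp.
by apply: eq_linext => t _; rewrite linext1.
Qed.

Lemma islin_tensl y : islin (fun x => tens x y).
Proof. by move=> a u v; rewrite !tensE linextD linextZ. Qed.

Lemma islin_tensr x : islin (fun y => tens x y).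
Proof.
move=> a u v; rewrite !tensE -linext_fun; apply: eq_linext => s _.
by rewrite linextD linextZ.
Qed.

Lemma tensU (s t : seq B) : tens (<< s >> : Vec R B) << t >> = << (s, t) >>.
Proof. by rewrite tensE !linext1. Qed.

Lemma msupp_tens x y p : p \in msupp (tens x y) -> p.1 \in msupp x /\ p.2 \in msupp y.
Proof.
rewrite tensE => /msupp_linext [s sx] /msupp_linext [t ty].
by rewrite msuppU oner_eq0 inE => /eqP ->.
Qed.
End Tensors.

Lemma tens_linext_bil (R : numFieldType) (B C : choiceType) (F H : Vec R B -> Vec R C)
  (x y : Vec R B) : islin F -> islin H ->
  linext (fun p => tens (F << p.1 >>) (H << p.2 >>)) (tens x y) = tens (F x) (H y).
Proof.
move=> LF LH; rewrite tens_linext (linext_basis x LF) (linext_comm _ _ (islin_tensl _)).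
apply: eq_linext => s _ /=.
by rewrite [H y](linext_basis y LH) (linext_comm _ _ (islin_tensr _)).
Qed.

Lemma tens_linext_l (R : numFieldType) (B : choiceType) (F : Vec R B -> Vec R B) x y :
  islin F -> linext (fun p => tens (F << p.1 >>) << p.2 >>) (tens x y) = tens (F x) y.
Proof. by move=> LF; exact: (tens_linext_bil (H:=id) x y LF (fun a u v => erefl)). Qed.

Lemma tens_linext_r (R : numFieldType) (B : choiceType) (H : Vec R B -> Vec R B) x y :
  islin H -> linext (fun p => tens << p.1 >> (H << p.2 >>)) (tens x y) = tens x (H y).
Proof. by move=> LH; exact: (tens_linext_bil (F:=id) x y (fun a u v => erefl) LH). Qed.

Section Coalgebra.
Variables (R : numFieldType) (B : choiceType) (G : gbasis B).
Implicit Types (x y : Vec R B).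

Lemma copE x : cop G x = linext (cop_b R G) x.
Proof. by []. Qed.

Lemma islin_cop : islin (cop (R:=R) G).
Proof. exact: islin_linext. Qed.

Lemma copU s : cop G (<< s >> : Vec R B) = cop_b R G s.
Proof. by rewrite copE linext1. Qed.

Lemma coderE d Q x : coder G d Q -> inS G x ->
  cop G (Q x) = linext (fun p => tens (Q << p.1 >>) << p.2 >> +
                     koz R d (degS G p.1) *: tens << p.1 >> (Q << p.2 >>)) (cop G x).
Proof.
case=> _ _ _ cQ /cQ ->; rewrite linext_add; congr (_ + _).
by rewrite /linext; apply: eq_bigr => p _; rewrite scalerA.
Qed.

Lemma inSU s : canon G s -> inS G (<< s >> : Vec R B).
Proof. by move=> C t; rewrite msuppU oner_eq0 inE => /eqP ->. Qed.

Lemma homogU s : homog G (degS G s) (<< s >> : Vec R B).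
Proof. by move=> t; rewrite msuppU oner_eq0 inE => /eqP ->. Qed.

Lemma inSB x y : inS G x -> inS G y -> inS G (x - y).
Proof. by move=> Hx Hy t /(fsubsetP (msuppB_le _ _)); rewrite inE => /orP[/Hx|/Hy]. Qed.

Lemma msupp_mono m t : t \in msupp (mono R G m) -> t = sort (gb_le G) m /\ canon G t.
Proof.
rewrite /mono; case: ifP => C; last by rewrite msupp0 inE.
by move/(fsubsetP (msuppZ_le _ _)); rewrite msuppU oner_eq0 inE => /eqP ->.
Qed.

Lemma count_id_lt (b : seq bool) : false \in b -> (count id b < size b)%N.
Proof.
move=> H; rewrite -(count_predC id b) -{1}[count id b]addn0 ltn_add2l.
by rewrite -has_count; apply/hasP; exists false.
Qed.

(* both tensor factors of the reduced coproduct of a monomial are canonical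
   monomials of strictly smaller length: the basis of the induction *)
Lemma msupp_cop_b s p : p \in msupp (cop_b R G s) ->
  [/\ canon G p.1, canon G p.2, (size p.1 < size s)%N & (size p.2 < size s)%N].
Proof.
case/msupp_sum => b /andP[_ /andP[tb fb]].
move/(fsubsetP (msuppZ_le _ _))/msupp_tens => [/msupp_mono [e1 c1] /msupp_mono [e2 c2]].
split => //; rewrite ?e1 ?e2 size_sort size_mask ?size_map ?size_tuple //.
  by move: (count_id_lt fb); rewrite size_tuple.
have : false \in map negb b by apply/mapP; exists true.
by move/count_id_lt; rewrite size_map size_tuple.
Qed.

Lemma msupp_cop x p : inS G x -> p \in msupp (cop G x) -> canon G p.1 /\ canon G p.2.
Proof. by move=> Hx /msupp_linext [s /Hx Cs] /msupp_cop_b []. Qed.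
End Coalgebra.

Lemma comorphE (R : numFieldType) (B C : choiceType) (GB : gbasis B) (GC : gbasis C)
  (F : Vec R B -> Vec R C) x : comorph GB GC F -> inS GB x ->
  cop GC (F x) = linext (fun p => tens (F << p.1 >>) (F << p.2 >>)) (cop GB x).
Proof. by case=> _ _ _ cF /cF. Qed.

Lemma perm_mask_split (T : eqType) (m : seq bool) (s : seq T) : size m = size s ->
  perm_eq (mask m s ++ mask (map negb m) s) s.
Proof.
elim: s m => [|y s IH] [|b m] //= [Hs]; case: b => /=; first by rewrite perm_cons IH.
by rewrite -cat1s perm_catCA /= perm_cons IH.
Qed.

Lemma nth_in_mask (T : eqType) (x0 : T) (m : seq bool) (s : seq T) j :
  nth false m j -> (j < size s)%N -> nth x0 s j \in mask m s.
Proof.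
elim: s m j => [|y s IH] [|b m] [|j] //=; first by move=> -> _; rewrite inE eqxx.
by move=> Hj Hs; case: b; rewrite ?inE IH ?orbT.
Qed.

Lemma count_mem_two (T : eqType) (x0 x : T) (s : seq T) i j :
  (i < j)%N -> (j < size s)%N -> nth x0 s i = x -> nth x0 s j = x -> (1 < count_mem x s)%N.
Proof.
elim: s i j => [|y s IH] [|i] [|j] //=.
  move=> _ Hj -> Hn; rewrite eqxx add1n ltnS -has_count; apply/hasP.
  by exists (nth x0 s j); [exact: mem_nth | rewrite /= Hn].
by move=> ij Hj Hi Hn'; rewrite addnC; apply: ltn_addr; apply: (IH i j); rewrite // -ltnS.
Qed.

(* For a basis ordered by a partial order, S(W) is cogenerated by its linear
   part: the coefficient of [x] (x) t in Delta(x t) is positive and the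
   reduced coproduct of every other canonical monomial misses [x] (x) t. *)
Section Cogeneration.
Variables (R : numFieldType) (K : choiceType) (H : gbasis K).
Local Notation le := (gb_le H).
Hypotheses (le_refl : reflexive le) (le_trans : transitive le) (le_anti : antisymmetric le).

Lemma canon_sorted s : canon H s -> sorted le s.
Proof. by case/and4P. Qed.

Lemma canon_mask s m : canon H s -> mask m s != [::] -> canon H (mask m s).
Proof.
case/and4P => _ ok srt cnt ne; rewrite /canon ne all_mask //= sorted_mask //=.
apply/allP => y ym; have ys := mem_mask ym; move/allP: cnt => /(_ y ys) /implyP H1.
by apply/implyP => od; apply: leq_trans (H1 od); exact: leq_count_mask.
Qed.

Lemma sort_sign_sorted s : sorted le s -> sort_sign R H s = 1.
Proof.
move=> Ss; rewrite /sort_sign /pair_sign; apply: big1 => i _; apply: big1 => j /andP[ij].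
have x0 := tnth (in_tuple s) i.
rewrite (tnth_nth x0 (in_tuple s) i) (tnth_nth x0 (in_tuple s) j) /= => /negP [].
by move: (sorted_leq_nth le_trans le_refl x0 Ss) => /(_ i j (ltn_ord i) (ltn_ord j) (ltnW ij)).
Qed.

Lemma mono_mask s m : canon H s ->
  mono R H (mask m s) = if mask m s == [::] then 0 else << mask m s >>.
Proof.
move=> Cs; have Sm := sorted_mask le_trans m (canon_sorted Cs).
rewrite /mono (sorted_sort le_trans Sm); case: eqP => [->|/eqP ne]; first by rewrite /canon eqxx.
by rewrite canon_mask // sort_sign_sorted // scale1r.
Qed.

Lemma cop_b_coef s q : canon H s ->
  (cop_b R H s)@_q = \sum_(b : (size s).-tuple bool | (true \in b) && (false \in b))
     unsh_sign R H b s * ((mask b s != [::]) && (mask (map negb b) s != [::]) &&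
                          ((mask b s, mask (map negb b) s) == q))%:R.
Proof.
move=> Cs; rewrite /cop_b raddf_sum; apply: eq_bigr => b _.
apply: (etrans (mcoeffZ _ _ _)); rewrite !mono_mask //; congr (_ * _).
case: eqP => _; case: eqP => _ /=;
  rewrite ?(islin0 (islin_tensl _)) ?(islin0 (islin_tensr _)) ?mcoeff0 //.
by rewrite tensU mcoeffU.
Qed.

Lemma cop_b_other u x t : canon H u -> canon H (x :: t) -> u != x :: t ->
  (cop_b R H u)@_([:: x], t) = 0.
Proof.
move=> Cu Cxt ne; rewrite cop_b_coef //; apply: big1 => b _.
case: andP => [[_ /eqP [e1 e2]]|_]; last by rewrite mulr0.
case/eqP: ne; apply: (sorted_eq le_trans le_anti); rewrite ?canon_sorted //.
by rewrite perm_sym -[x :: t]/([:: x] ++ t) -e1 -e2; apply: perm_mask_split; rewrite size_tuple.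
Qed.

(* splitting off copies of the first letter x carries no Koszul sign: an odd
   x occurs only once, and the letters before it are all equal to x *)
Lemma unsh_sign_head u x t b : canon H u -> u = x :: t -> mask b u = [:: x] ->
  size b = size u -> unsh_sign R H b u = 1.
Proof.
move=> Cu Eu Em Sb; have Su := canon_sorted Cu.
rewrite /unsh_sign /pair_sign; apply: big1 => i _; apply: big1 => j /andP[ij /andP[_ bj]].
have x0 := tnth (in_tuple u) i.
rewrite (tnth_nth x0 (in_tuple u) i) (tnth_nth x0 (in_tuple u) j) /=.
have hj : nth x0 u j = x.
  by have := nth_in_mask x0 bj (ltn_ord j); rewrite Em inE => /eqP.
have hi : nth x0 u i = x.
  have h0 : nth x0 u 0 = x by rewrite Eu.
  have usz : (0 < size u)%N by rewrite Eu.
  have le_nth := sorted_leq_nth le_trans le_refl x0 Su.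
  apply: le_anti; apply/andP; split.
    by rewrite -hj; apply: le_nth; rewrite ?inE ?ltn_ord ?(ltnW ij).
  by rewrite -{1}h0; apply: le_nth; rewrite ?inE ?ltn_ord.
have xu : x \in u by rewrite Eu inE eqxx.
case/and4P: Cu => _ _ _ /allP /(_ x xu) /implyP odd_c.
rewrite hi hj /koz; case: ifP => // /andP [od _].
by have := odd_c od; rewrite leqNgt (count_mem_two ij (ltn_ord j) hi hj).
Qed.

Lemma cop_b_head_pos x t : canon H (x :: t) -> t != [::] ->
  0 < (cop_b R H (x :: t))@_([:: x], t).
Proof.
move=> Cu tne; rewrite cop_b_coef //.
have [a [t' Et]] : exists a t', t = a :: t' by case: t tne {Cu} => // a t' _; exists a, t'.
pose b0 : (size (x :: t)).-tuple bool := [tuple of true :: nseq (size t) false].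
have b0c : (true \in b0) && (false \in b0) by rewrite /b0 /= Et /= !in_cons !eqxx.
have m1 : mask b0 (x :: t) = [:: x] by rewrite /= mask_false.
have m2 : mask (map negb b0) (x :: t) = t by rewrite /= map_nseq mask_true ?size_nseq.
rewrite (bigD1 b0) // m1 m2 tne eqxx /= mulr1 (unsh_sign_head Cu (erefl _) m1) ?size_tuple //.
rewrite ltr_pwDl // ?ltr01 // sumr_ge0 // => b /andP[_ _].
case: andP => [[_ /eqP [e1 _]]|_]; last by rewrite mulr0.
by rewrite mulr1 (unsh_sign_head Cu (erefl _) e1) ?size_tuple.
Qed.

Theorem cogenerated (w : Vec R K) : inS H w ->
  (forall u, size u = 1%N -> w@_u = 0) -> cop H w = 0 -> w = 0.
Proof.
move=> Hw w1 Dw; apply/malgP => u; rewrite mcoeff0; apply/eqP; rewrite mcoeff_eq0.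
apply/negP => uw; have Cu := Hw u uw.
case: u Cu uw => [|x t] Cu uw; first by case/and4P: Cu.
have [t0|tne] := eqVneq t [::].
  by move: uw; rewrite t0 -[_ \in _]negbK -mcoeff_eq0 w1 ?eqxx.
move/(congr1 (mcoeff ([:: x], t))): Dw; rewrite mcoeff0 copE mcoeff_linext.
rewrite (bigD1_seq (x :: t)) ?fset_uniq //= big_seq_cond big1 ?addr0.
  move/eqP; rewrite mulf_eq0 => /orP [|]; first by rewrite mcoeff_eq0 uw.
  by rewrite gt_eqF // (cop_b_head_pos Cu tne).
by move=> u' /andP[u'w ne]; rewrite (cop_b_other (Hw _ u'w) Cu ne) mulr0.
Qed.
End Cogeneration.

Section Lexicographic.
Variables (B : eqType) (le : rel B).

Lemma lexrel_refl : reflexive (lexrel le).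
Proof. by elim => //= a s IH; rewrite eqxx. Qed.

Lemma lexrel_anti : antisymmetric le -> antisymmetric (lexrel le).
Proof.
move=> Ha; elim=> [|a s IH] [|b t] //=.
case: (eqVneq a b) => [<-|nab]; first by move=> /IH ->.
by move=> Hab; case/negP: nab; apply/eqP; exact: Ha.
Qed.

Lemma lexrel_trans : antisymmetric le -> transitive le -> transitive (lexrel le).
Proof.
move=> Ha Ht y x z; elim: x y z => [|a s IH] [|b t] [|c u] //=.
case: (eqVneq a b) => [<-|nab].
  by case: (eqVneq a c) => [_|nac]; first exact: IH.
case: (eqVneq b c) => [<-|nbc]; first by rewrite (negPf nab).
case: (eqVneq a c) => [eac|_]; last exact: Ht.
move: nbc; rewrite -eac => nba h1 h2; case/negP: nba; apply/eqP; apply: Ha; by rewrite h1 h2.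
Qed.
End Lexicographic.

Lemma pr1E (R : numFieldType) (B : choiceType) (w : Vec R (seq B)) :
  pr1 w = linext (fun u => if size u == 1%N then (<< head [::] u >> : Vec R B) else 0) w.
Proof.
rewrite /pr1 /linext big_mkcond; apply: eq_bigr => u _.
by case: ifP => _ //; rewrite scaler0.
Qed.

Lemma islin_pr1 (R : numFieldType) (B : choiceType) : islin (@pr1 R B).
Proof. by move=> a x y; rewrite !pr1E; exact: islin_linext. Qed.

Lemma pr1_coef (R : numFieldType) (B : choiceType) (w : Vec R (seq B)) s :
  (pr1 w)@_s = w@_[:: s].
Proof.
rewrite pr1E mcoeff_linext -[in RHS](linext_id w) mcoeff_linext.
apply: eq_bigr => u _; congr (_ * _).
by case: u => [|a [|b u]] /=; rewrite ?mcoeff0 ?mcoeffU ?eqseq_cons ?andbT ?andbF.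
Qed.

Corollary outer_cogenerated (R : numFieldType) (B : choiceType) (G : gbasis B) :
  reflexive (gb_le G) -> transitive (gb_le G) -> antisymmetric (gb_le G) ->
  forall w : Vec R (seq B), inS (outer G) w -> pr1 w = 0 -> cop (outer G) w = 0 -> w = 0.
Proof.
move=> Hr Ht Ha w Hw Pw; apply: cogenerated => //.
- exact: lexrel_refl.
- exact: lexrel_trans.
- exact: lexrel_anti.
by case=> [|s [|]] // _; rewrite -pr1_coef Pw mcoeff0.
Qed.

Section Intertwining.
Variables (R : numFieldType) (B : choiceType) (G : gbasis B).
Hypotheses (le_refl : reflexive (gb_le G)) (le_trans : transitive (gb_le G))
  (le_anti : antisymmetric (gb_le G)).
Local Notation O := (outer G).
Variables (d : int) (D : Vec R B -> Vec R B) (Dd : Vec R (seq B) -> Vec R (seq B))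
  (I : Vec R B -> Vec R (seq B)).
Hypotheses (HD : coder G d D) (HDd : extends G d D Dd) (HI : is_I G I).

Lemma homog_I s : canon G s -> homog O (degS G s) (I << s >>).
Proof. by case: HI => -[_ _ hI _] _ Cs; apply: hI; [apply: inSU | apply: homogU]. Qed.

Lemma pr1_extends w : inS O w -> pr1 (Dd w) = D (pr1 w).
Proof.
case: HD => LD _ _ _; case: HDd => -[LDd _ _ _] pDd Hw.
rewrite (linext_basis w LDd) (linext_comm _ _ (@islin_pr1 R B)) pr1E (linext_comm _ _ LD).
by apply: eq_linext => u /Hw Cu; rewrite pDd //; case: ifP => _ //; rewrite islin0.
Qed.

Lemma tens_linext_koz (c : int -> R) e (a b : Vec R (seq B)) : homog O e a ->
  linext (fun q => c (degS O q.1) *: tens << q.1 >> (Dd << q.2 >>)) (tens a b) =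
  c e *: tens a (Dd b).
Proof.
case: HDd => -[LDd _ _ _] _ Ha; rewrite tens_linext.
rewrite (@eq_linext _ _ _ _ (fun s => c e *: linext (fun t => tens << s >> (Dd << t >>)) b)).
  by rewrite linext_scale -(tens_linext (fun q => tens << q.1 >> (Dd << q.2 >>))) tens_linext_r.
by move=> s Hs /=; rewrite -linext_scale; apply: eq_linext => t _ /=; rewrite (Ha s Hs).
Qed.

(* Both Dd o I and I o D are coderivations along I: their coproducts on a
   monomial s are built in the same way from their values on the factors of
   the reduced coproduct of s. *)
Definition along_I (F : Vec R B -> Vec R (seq B)) (s : seq B) : Ten R (seq B) :=
  linext (fun p => tens (F << p.1 >>) (I << p.2 >>) +
    koz R d (degS G p.1) *: tens (I << p.1 >>) (F << p.2 >>)) (cop_b R G s).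

Lemma cop_extension_I s : canon G s ->
  cop O (Dd (I << s >>)) = along_I (fun x => Dd (I x)) s.
Proof.
move=> Cs; case: (HI) => -[_ SI _ _] _; case: HDd => cDd _.
rewrite (coderE cDd (SI _ (inSU Cs))) (comorphE (proj1 HI) (inSU Cs)) copU linext_comp.
apply: eq_linext => p /msupp_cop_b [C1 _ _ _].
case: cDd => LDd _ _ _.
by rewrite linext_add tens_linext_l // (tens_linext_koz _ _ (homog_I C1)).
Qed.

Lemma cop_I_coder s : canon G s -> cop O (I (D << s >>)) = along_I (fun x => I (D x)) s.
Proof.
move=> Cs; case: (HI) => -[LI _ _ _] _; case: (HD) => _ SD _ _.
rewrite (comorphE (proj1 HI) (SD _ (inSU Cs))) (coderE HD (inSU Cs)) copU linext_comp.
apply: eq_linext => p _.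
by rewrite linextD linextZ !tens_linext_bil.
Qed.

(* By induction on the length of monomials: the difference F = Dd o I - I o D
   vanishes on shorter monomials, so its value on a monomial has zero linear
   part and zero reduced coproduct, hence is zero by cogeneration. *)
Theorem extension_intertwines_I x : inS G x -> Dd (I x) = I (D x).
Proof.
case: (HD) => LD SD _ _; case: (HDd) => -[LDd SDd _ _] _; case: (HI) => -[LI SI _ _] pI.
pose F y := Dd (I y) - I (D y).
have LF : islin F by move=> a y z; rewrite /F LI LDd LD LI scalerBr opprD addrACA.
suff F0 : forall N s, (size s <= N)%N -> canon G s -> F << s >> = 0.
  move=> Hx; apply/eqP; rewrite -subr_eq0 -/(F x) (linext_basis x LF); apply/eqP.
  by apply: linext_eq0 => s /Hx; apply: (F0 (size s)).
elim=> [|N IH] s Hsz Cs; first by case: s Hsz Cs.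
have FsE p : p \in msupp (cop_b R G s) -> Dd (I << p.1 >>) = I (D << p.1 >>) /\
                                         Dd (I << p.2 >>) = I (D << p.2 >>).
  move=> /msupp_cop_b [C1 C2 S1 S2]; split; apply/eqP; rewrite -subr_eq0; apply/eqP;
  by apply: IH; rewrite // -ltnS (leq_trans _ Hsz).
have Us := inSU (R:=R) Cs; apply: outer_cogenerated => //.
- by apply: inSB; [apply: SDd; apply: SI | apply: SI; apply: SD].
- by rewrite (islinB (@islin_pr1 R B)) (pr1_extends (SI _ Us)) !pI ?subrr //; apply: SD.
rewrite (islinB (islin_cop _)) cop_extension_I // cop_I_coder //; apply/eqP.
by rewrite subr_eq0; apply/eqP; apply: eq_linext => p /FsE [-> ->].
Qed.
End Intertwining.

Lemma comorph_comp (R : numFieldType) (A B C : choiceType)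
  (GA : gbasis A) (GB : gbasis B) (GC : gbasis C)
  (F : Vec R A -> Vec R B) (H : Vec R B -> Vec R C) :
  comorph GA GB F -> comorph GB GC H -> comorph GA GC (fun x => H (F x)).
Proof.
move=> cF cH; have [LF SF hF _] := cF; have [LH SH hH _] := cH; split.
- by move=> a x y; rewrite LF LH.
- by move=> x /SF /SH.
- by move=> d x Hx Hd; apply: hH; [apply: SF | apply: hF].
move=> x Hx; rewrite (comorphE cH (SF _ Hx)) (comorphE cF Hx) linext_comp.
by apply: eq_linext => p _; rewrite tens_linext_bil.
Qed.

Section Transfer.
Variables (R : numFieldType) (E V : choiceType) (GE : gbasis E) (GV : gbasis V).
Hypotheses (le_refl : reflexive (gb_le GV)) (le_trans : transitive (gb_le GV))
  (le_anti : antisymmetric (gb_le GV)).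
Local Notation O := (outer GV).
Variables (Phi : seq E -> Vec R V -> Vec R V)
  (PhiD : seq E -> Vec R (seq V) -> Vec R (seq V))
  (I : Vec R V -> Vec R (seq V)) (Tt : Vec R (seq V) -> Vec R E).
Hypotheses (HPhi : forall m, canon GE m -> coder GV (degS GE m + 1) (Phi m))
  (HPhiD : forall m, canon GE m -> extends GV (degS GE m + 1) (Phi m) (PhiD m))
  (HI : is_I GV I) (HT : comorph O GE Tt).

Lemma Phi_atE (C : choiceType) (P : seq E -> Vec R C -> Vec R C) x y :
  Phi_at P x y = linext (fun m => P m y) x.
Proof. by []. Qed.

(* rho(x) o I = I o Phi_x, by the intertwining identity for each Phi_m *)
Lemma Phi_at_I x y : inS GE x -> inS GV y -> Phi_at PhiD x (I y) = I (Phi_at Phi x y).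
Proof.
move=> Hx Hy; case: (HI) => -[LI _ _ _] _.
rewrite !Phi_atE (linext_comm _ _ LI); apply: eq_linext => m /Hx Cm.
exact: (extension_intertwines_I le_refl le_trans le_anti (HPhi Cm) (HPhiD Cm) HI Hy).
Qed.

Lemma Phi_at_tens a b : inS O a ->
  linext (fun q => Phi_at PhiD (Tt << q.1 >>) << q.2 >>) (tens a b) = Phi_at PhiD (Tt a) b.
Proof.
case: HT => LT ST _ _ Ha; rewrite tens_linext [Tt a](linext_basis a LT) Phi_atE linext_comp.
apply: eq_linext => s /Ha Cs.
change (linext (fun t => linext (fun m => PhiD m << t >>) (Tt << s >>)) b =
        linext (fun m => PhiD m b) (Tt << s >>)).
rewrite linext_swap.
apply: eq_linext => m /(ST _ (inSU Cs)) Cm.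
by case: (HPhiD Cm) => -[LP _ _ _] _; rewrite -linext_basis.
Qed.

Lemma PhiT_I v : inS GV v -> PhiT O PhiD Tt (I v) = I (PhiT GV Phi (fun w => Tt (I w)) v).
Proof.
move=> Hv; case: (HI) => -[LI SI _ _] _; case: (HT) => _ ST _ _.
change (linext (fun q => Phi_at PhiD (Tt << q.1 >>) << q.2 >>) (cop O (I v)) =
        I (linext (fun p => Phi_at Phi (Tt (I << p.1 >>)) << p.2 >>) (cop GV v))).
rewrite (comorphE (proj1 HI) Hv) linext_comp (linext_comm _ _ LI).
apply: eq_linext => p /(msupp_cop Hv) [C1 C2].
rewrite Phi_at_tens; last by apply: SI; apply: inSU.
by apply: Phi_at_I; [apply: ST; apply: SI |]; apply: inSU.
Qed.
End Transfer.

Lemma fin_gb_refl (n : nat) (deg : 'I_n -> int) : reflexive (gb_le (fin_gb deg)).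
Proof. by move=> i /=. Qed.

Lemma fin_gb_trans (n : nat) (deg : 'I_n -> int) : transitive (gb_le (fin_gb deg)).
Proof. by move=> j i l /=; apply: leq_trans. Qed.

Lemma fin_gb_anti (n : nat) (deg : 'I_n -> int) : antisymmetric (gb_le (fin_gb deg)).
Proof. by move=> i j /= /anti_leq /ord_inj. Qed.

Unset Implicit Arguments.

Theorem mainTheorem5 (R : numFieldType) (n k : nat)
  (degV : 'I_n -> int) (degE : 'I_k -> int)
  (ME : Vec R 'I_k -> Vec R 'I_k) (MV : Vec R 'I_n -> Vec R 'I_n)
  (Phi : seq 'I_k -> Vec R 'I_n -> Vec R 'I_n)
  (PhiD : seq 'I_k -> Vec R (seq 'I_n) -> Vec R (seq 'I_n))
  (MVd : Vec R (seq 'I_n) -> Vec R (seq 'I_n))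
  (I : Vec R 'I_n -> Vec R (seq 'I_n))
  (Tt : Vec R (seq 'I_n) -> Vec R 'I_k) :
  LieInf (fin_gb degE) ME ->
  LieInf (fin_gb degV) MV ->
  action (fin_gb degE) (fin_gb degV) ME MV Phi ->
  (forall m, canon (fin_gb degE) m ->
     extends (fin_gb degV) (degS (fin_gb degE) m + 1) (Phi m) (PhiD m)) ->
  extends (fin_gb degV) 1 MV MVd ->
  is_I (fin_gb degV) I ->
  Oop (fin_gb degE) (outer (fin_gb degV)) ME MVd PhiD Tt ->
  Oop (fin_gb degE) (fin_gb degV) ME MV Phi (fun v => Tt (I v)).
Proof.
move=> _ [HMV _] [HPhi _] HPhiD HMVd HI [HT ET].
have [[LI SI _ _] _] := HI.
have Vrefl := @fin_gb_refl _ degV.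
have Vtrans := @fin_gb_trans _ degV.
have Vanti := @fin_gb_anti _ degV.
split; first exact: comorph_comp (proj1 HI) HT.
move=> v Hv; rewrite ET; last exact: SI.
congr (Tt _); rewrite (islinD LI).
rewrite (extension_intertwines_I Vrefl Vtrans Vanti HMV HMVd HI Hv).
by rewrite (PhiT_I Vrefl Vtrans Vanti HPhi HPhiD HI HT Hv).
Qed.
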